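(* For every $i\in\{1,\dots,k\}$ and every $\gamma>0$: (a) if $c_i(0)=0$ and $p_i>(1-\varepsilon)+\delta$, then $c_i(\gamma)=0$; (b) if $c_i(0)=1$ and $p_i<(1-\varepsilon)-\delta$, then $c_i(\gamma)=1$.
   Context: Let $k\ge1$, $\varepsilon\in(0,1)$, $\delta\ge0$, examples $\mathbf{z}_1,\dots,\mathbf{z}_k$ with base conformity values $A(\mathbf{z}_i)\in\mathbb{R}$, and numbers $p_i\in[0,1]$ (estimated probabilities of correctness from the base predictor). The update function is $U^*(\mathbf{z}_i;A,\delta)=+1$ if $p_i<(1-\varepsilon)-\delta$, $-1$ if $p_i>(1-\varepsilon)+\delta$, and $0$ otherwise; for $\gamma\ge0$, $A^*_\gamma(\mathbf{z}_i)=A(\mathbf{z}_i)+\gamma U^*(\mathbf{z}_i;A,\delta)$. Define $q(\gamma)$: among indices $i\in\{1,\dots,k\}$ with $\sum_{j=1}^k\mathbb{I}[A^*_\gamma(\mathbf{z}_i)\ge A^*_\gamma(\mathbf{z}_j)]+1\ge\varepsilon(k+1)$, take those minimizing $A^*_\gamma(\mathbf{z}_i)$, and let $q(\gamma)$ be the smallest such index; $t(\gamma)=A^*_\gamma(\mathbf{z}_{q(\gamma)})$. Finally $c_i(\gamma)=\mathbb{I}[A^*_\gamma(\mathbf{z}_i)\ge t(\gamma)]$ indicates whether the prediction for example $i$ is correct. *)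

From mathcomp Require Import all_boot all_order all_algebra.
Set Implicit Arguments. Unset Strict Implicit. Unset Printing Implicit Defensive.
Import Order.TTheory GRing.Theory Num.Theory.
Local Open Scope ring_scope.

(* Examples z_1..z_k are indexed by 'I_k (index i : 'I_k stands for z_{i+1}). *)
Section Defs.
Variables (R : realFieldType) (k : nat).

Definition Ustar (eps delta : R) (p : 'I_k -> R) (i : 'I_k) : R :=
  if p i < (1 - eps) - delta then 1
  else if p i > (1 - eps) + delta then -1
  else 0.

Definition Astar (A p : 'I_k -> R) (eps delta gamma : R) (i : 'I_k) : R :=
  A i + gamma * Ustar eps delta p i.

Definition admissible (As : 'I_k -> R) (eps : R) (i : 'I_k) : bool :=
  eps * (k.+1)%:R <= (\sum_(j < k) ((As j <= As i)%R : bool)%:R) + 1.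

Definition qidx (As : 'I_k -> R) (eps : R) : option 'I_k :=
  [pick i | [&& admissible As eps i,
             [forall j, admissible As eps j ==> (As i <= As j)] &
             [forall j, (admissible As eps j && (As j == As i)) ==> (i <= j)%N]]].

(* t(gamma) = A*_gamma(z_{q(gamma)}) (the default 0 is never used: the set is
   nonempty since eps < 1) *)
Definition thr (As : 'I_k -> R) (eps : R) : R :=
  if qidx As eps is Some q then As q else 0.

Definition cov (A p : 'I_k -> R) (eps delta gamma : R) (i : 'I_k) : bool :=
  thr (Astar A p eps delta gamma) eps <= Astar A p eps delta gamma i.

End Defs.

From mathcomp Require Import lra.
From mathcomp Require Import all_boot all_order all_algebra.
Set Implicit Arguments. Unset Strict Implicit. Unset Printing Implicit Defensive.
Import Order.TTheory GRing.Theory Num.Theory.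
Local Open Scope ring_scope.

(* Whether example i is covered depends only on the ranks of the
   conformity scores: for eps <= 1 the threshold t lies at or below As i
   exactly when i is admissible, i.e. when enough scores lie at or below As i
   (thr_le_admissible).  Admissibility of i is monotone under any change of
   scores that keeps every score previously below As i still below it
   (admissible_dominated).  Now if p i is high, U* i = -1, so the update lowers
   A i by gamma while lowering every other score by at most gamma: every score
   below the new value of i was already below the old one, so a non-covered i
   stays non-covered.  Symmetrically, if p i is low, U* i = +1 raises A i by
   gamma and every other score by at most gamma, so a covered i stays covered. *)

Section Update.
Variables (R : realFieldType) (k : nat) (eps delta : R) (A p : 'I_k -> R).

Lemma Ustar_bound (i : 'I_k) : -1 <= Ustar eps delta p i <= 1.
Proof.
by rewrite /Ustar; case: ifP => _; [|case: ifP => _]; apply/andP; split; lra.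
Qed.

Lemma Ustar_low (i : 'I_k) : p i < (1 - eps) - delta -> Ustar eps delta p i = 1.
Proof. by rewrite /Ustar => ->. Qed.

(* An over-confident base prediction is pushed down (the two cases are
   exclusive because delta >= 0). *)
Lemma Ustar_high (i : 'I_k) : 0 <= delta ->
  p i > (1 - eps) + delta -> Ustar eps delta p i = -1.
Proof. by rewrite /Ustar => hd hp; rewrite hp ifF //; apply/negbTE; lra. Qed.

Lemma Astar0 (j : 'I_k) : Astar A p eps delta 0 j = A j.
Proof. by rewrite /Astar mul0r addr0. Qed.

Lemma Astar_shift (gamma : R) (j : 'I_k) : 0 <= gamma ->
  A j - gamma <= Astar A p eps delta gamma j <= A j + gamma.
Proof.
move=> hg; have /andP[lo hi] := Ustar_bound j; rewrite /Astar.
by apply/andP; split; nra.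
Qed.

End Update.

Section Ranks.
Variables (R : realFieldType) (k : nat) (eps : R).
Implicit Types (As Bs : 'I_k -> R).

(* If every score at or below As i is, under Bs, at or below Bs i', then the
   rank of i' under Bs is at least that of i under As, so admissibility of i
   for As transfers to i' for Bs. *)
Lemma admissible_dominated As Bs (i i' : 'I_k) :
  (forall j, As j <= As i -> Bs j <= Bs i') ->
  admissible As eps i -> admissible Bs eps i'.
Proof.
move=> dom; rewrite /admissible => /le_trans; apply.
rewrite lerD2r; apply: ler_sum => j _.
by case: (boolP (As j <= As i)) => [/dom -> | _] //=; rewrite ler0n.
Qed.

(* A largest score has rank k, hence is admissible as soon as eps <= 1. *)
Lemma admissible_argmax As (i0 : 'I_k) : eps <= 1 ->
  admissible As eps [arg max_(m > i0) As m]%O.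
Proof.
move=> he; case: arg_maxP => // m _ hm; rewrite /admissible.
rewrite (eq_bigr (fun=> 1)) => [|j _]; last by have /= -> := hm j isT.
rewrite sumr_const card_ord -natr1 -[X in _ <= X]mul1r.
by apply: ler_wpM2r => //; rewrite addr_ge0 // ler0n.
Qed.

Lemma qidx_spec As (i0 : 'I_k) : eps <= 1 ->
  exists2 q, qidx As eps = Some q &
    admissible As eps q /\ forall j, admissible As eps j -> As q <= As j.
Proof.
move=> he; have am := admissible_argmax As i0 he.
case: (@arg_minP _ _ _ _ (admissible As eps) As am) => v av hv.
pose P j := admissible As eps j && (As j == As v).
have Pv : P v by rewrite /P av eqxx.
case: (@arg_minP _ nat _ v P (fun j => nat_of_ord j) Pv)
  => w /andP[aw /eqP ew] hw.
rewrite /qidx; case: pickP => [q /and3P[aq /forallP mq _] | none].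
  by exists q => //; split => // j aj; have := mq j; rewrite aj.
have := none w; rewrite aw /=.
have -> : [forall j, admissible As eps j ==> (As w <= As j)].
  by apply/forallP => j; apply/implyP => aj; rewrite ew; exact: hv.
suff -> : [forall j, (admissible As eps j && (As j == As w)) ==> (w <= j)%N]
  by [].
by apply/forallP => j; apply/implyP; rewrite ew; exact: hw.
Qed.

Lemma thr_le_admissible As (i : 'I_k) : eps <= 1 ->
  (thr As eps <= As i) = admissible As eps i.
Proof.
move=> he; rewrite /thr; have [q -> [aq qmin]] := qidx_spec As i he.
apply/idP/idP => [qi | /qmin //].
by apply: admissible_dominated aq => j /le_trans; apply.
Qed.

End Ranks.

Theorem theorem1 (R : realFieldType) (k : nat) (eps delta : R)
  (A p : 'I_k -> R) :
  (1 <= k)%N -> 0 < eps < 1 -> 0 <= delta ->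
  (forall i, 0 <= p i <= 1) ->
  forall (i : 'I_k) (gamma : R), 0 < gamma ->
    (cov A p eps delta 0 i = false -> p i > (1 - eps) + delta ->
       cov A p eps delta gamma i = false) /\
    (cov A p eps delta 0 i = true -> p i < (1 - eps) - delta ->
       cov A p eps delta gamma i = true).
Proof.
move=> _ /andP[_ /ltW he] hd _ i g /ltW hg.
rewrite /cov !thr_le_admissible //.
have shift j := Astar_shift eps delta A p j hg.
split=> [h0 hp | h0 hp].
- (* i moves down by g, the others by at most g: new ranks below i were old *)
  apply: negbTE; apply: contraFN h0; apply: admissible_dominated => j.
  have /andP[lo _] := shift j.
  by rewrite !Astar0 {2}/Astar (Ustar_high hd hp); lra.
- (* i moves up by g, the others by at most g: old ranks below i persist *)
  apply: admissible_dominated h0 => j hj.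
  have /andP[_ hi] := shift j; move: hj; rewrite !Astar0.
  by rewrite {2}/Astar (Ustar_low hp); lra.
Qed.
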